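(* Let $X_1,\dots,X_N$ be independent nonnegative random variables and $\theta>0$. Suppose $\overline{F}_{X_1}(x)=O(x^{-\theta})$ and, for every $2\le j\le N$, there exists $\varphi_j\in\mathfrak{F}$ with $\overline{F}_{X_j}(\varphi_j(x))=O(x^{-\theta})$ and $\mathbb{E}[X_j^\theta]<\infty$. Then $\overline{F}_{\prod_{i=1}^N X_i}(x)=O(x^{-\theta})$.
   Context: $\overline{F}_Y(x)=\Pr(Y>x)$; $f(x)=O(g(x))$ means $\limsup_{x\to\infty}f(x)/g(x)<\infty$. $\mathfrak{F}$ is the class of functions $\varphi:\mathbb{R}_{\ge0}\to\mathbb{R}_{\ge0}$ with $\lim_{x\to\infty}\varphi(x)=\infty$ and $\lim_{x\to\infty}\varphi(x)/x=0$. *)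

From HB Require Import structures.
From mathcomp Require Import all_boot all_order all_algebra.
From mathcomp Require Import all_classical all_reals all_analysis.
Set Implicit Arguments. Unset Strict Implicit. Unset Printing Implicit Defensive.
Import Order.TTheory GRing.Theory Num.Theory.
Import numFieldNormedType.Exports.
Local Open Scope classical_set_scope.
Local Open Scope ring_scope.

Definition survival d (T : measurableType d) (R : realType)
  (P : probability T R) (Y : T -> R) (x : R) : R :=
  fine (P [set t | x < Y t]).

Definition mutually_independent d (T : measurableType d) (R : realType)
  (P : probability T R) (n : nat) (X : 'I_n -> T -> R) : Prop :=
  forall (J : {set 'I_n}) (B : 'I_n -> set R),
    (forall i, i \in J -> measurable (B i)) ->
    P (\bigcap_(i in [set j | j \in J]) (X i @^-1` B i)) =
    (\prod_(i in J) P (X i @^-1` B i))%E.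

(* The class \mathfrak{F}: phi : R_{>=0} -> R_{>=0} with phi x -> +oo and
   phi x / x -> 0 as x -> +oo.  (phi is given on all of R; only its values
   on [0, +oo) are constrained.) *)
Definition frakF (R : realType) (phi : R -> R) : Prop :=
  (forall x, 0 <= x -> 0 <= phi x) /\
  (phi x @[x --> +oo] --> +oo) /\
  ((fun x => phi x / x) x @[x --> +oo] --> (0 : R)).

(* f(x) = O(g(x)) as x -> +oo, i.e. limsup_{x->oo} f(x)/g(x) < oo, written
   (for g eventually positive, as in all uses here) as: there is a constant C
   with f x <= C * g x for all sufficiently large x. *)
Definition bigO_infty (R : realType) (f g : R -> R) : Prop :=
  exists C : R, \forall x \near +oo, f x <= C * g x.

(* Induction on the number of factors Z_k = X_1 ... X_k.  Independence is only
   available for the X_i themselves, not for Z_k and X_(k+1), so the induction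
   hypothesis is a tail bound for Z_k that holds uniformly after conditioning on
   any event A = {X_i \in B_i for k < i <= N}:
     P(Z_k > s, A) <= C s^-theta P(A).
   For the step, with Y = X_(k+1), the event {Z_k Y > s} is covered by
   {Y > phi s}, {Z_k > s} (when Y < 1), and the pieces
   {Z_k > s / 2^(m+1), 2^m <= Y < 2^(m+1)} for 2^m <= phi s.  The first is
   O(s^-theta) by the hypothesis on phi and the second by induction; on the
   dyadic pieces the induction hypothesis, conditioned on {Y in shell} /\ A,
   applies because phi s / s -> 0 keeps s / 2^(m+1) >= s / (2 phi s) large, and
   their total is at most C 2^theta s^-theta E[Y^theta] P(A).  Nothing else
   about phi is used. *)

From HB Require Import structures.
From mathcomp Require Import all_boot all_order all_algebra.
From mathcomp Require Import all_classical all_reals all_analysis.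
From mathcomp Require Import measurable_realfun ring.
Set Implicit Arguments.
Unset Strict Implicit.
Unset Printing Implicit Defensive.

Import Order.TTheory GRing.Theory Num.Theory.
Import numFieldNormedType.Exports.
Local Open Scope classical_set_scope.
Local Open Scope ring_scope.

Lemma bigO_powRNP (R : realType) (f : R -> R) (theta : R) :
  bigO_infty f (fun x => x `^ (- theta)) <->
  exists C, \forall s \near +oo, f s * s `^ theta <= C.
Proof.
split=> -[C fC]; exists C; near=> s.
- have s_gt0 : 0 < s by near: s; exact: nbhs_pinfty_gt.
  rewrite -ler_pdivlMr ?powR_gt0// -powRN; near: s; exact: fC.
- have s_gt0 : 0 < s by near: s; exact: nbhs_pinfty_gt.
  rewrite powRN ler_pdivlMr ?powR_gt0//; near: s; exact: fC.
Unshelve. all: by end_near.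
Qed.

Lemma measurable_gt (R : realType) (a : R) : measurable [set y | a < y].
Proof. by rewrite -set_itvoy; exact: measurable_itv. Qed.

Section dyadic_shells.
Context {R : realType}.

Lemma expr2_le_count (p : R) :
  exists K, forall m, ((2 : R) ^+ m <= p) = (m < K)%N.
Proof.
have ex_big : exists n, p < (2 : R) ^+ n.
  exists (Num.truncn `|p|).+1; apply: le_lt_trans (ler_norm p) _.
  by apply: lt_trans (truncnS_gt _) _; rewrite -natrX ltr_nat ltn_expl.
case: (ex_minnP ex_big) => K p_lt min_K; exists K => m.
apply/idP/idP => [le_p|lt_mK].
  by rewrite -(@ltr_eXn2l R 2) ?ltr1n// (le_lt_trans le_p).
by rewrite leNgt; apply/negP => /min_K; rewrite leqNgt lt_mK.
Qed.

Definition dyadic_shell (m : nat) : set R :=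
  `[(2 : R) ^+ m, 2 ^+ m.+1[%classic.

Lemma dyadic_shell_exists (y : R) :
  1 <= y -> exists m, dyadic_shell m y.
Proof.
move=> y_ge1; have [[|m] countK] := expr2_le_count y.
  by have := countK 0%N; rewrite expr0 y_ge1.
exists m; rewrite /dyadic_shell/= in_itv/= countK ltnSn/=.
by rewrite ltNge countK ltnn.
Qed.

Lemma mul_gt_dyadic_cases (s z y p : R) :
  0 <= z -> s < z * y ->
  [\/ p < y, s < z |
      exists m, [/\ 2 ^+ m <= p, dyadic_shell m y & s / 2 ^+ m.+1 < z]].
Proof.
move=> z_ge0 s_lt; have [|y_le_p] := ltP p y; first by constructor 1.
have [y_lt1|y_ge1] := ltP y 1.
  by constructor 2; apply: lt_le_trans s_lt _; rewrite ler_piMr// ltW.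
have [m shell_y] := dyadic_shell_exists y_ge1; constructor 3; exists m.
move: (shell_y); rewrite /dyadic_shell/= in_itv/= => /andP[m_le_y y_lt].
split=> //; first exact: le_trans y_le_p.
rewrite ltr_pdivrMr ?exprn_gt0//; apply: lt_le_trans s_lt _.
by rewrite ler_wpM2l// ltW.
Qed.

Lemma dyadic_shell_uniq m n (y : R) :
  dyadic_shell m y -> dyadic_shell n y -> m = n.
Proof.
have le_shell i j : dyadic_shell i y -> dyadic_shell j y -> (i <= j)%N.
  rewrite /dyadic_shell/= !in_itv/= => /andP[le_i _] /andP[_ lt_j].
  by rewrite -ltnS -(@ltr_eXn2l R 2) ?ltr1n// (le_lt_trans le_i).
by move=> shell_m shell_n; apply/eqP; rewrite eqn_leq !le_shell.
Qed.

Lemma sum_dyadic_indic_le (theta y : R) K : 0 <= theta ->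
  \sum_(m < K) (2 ^+ m) `^ theta * \1_(dyadic_shell m) y <= y `^ theta.
Proof.
move=> theta_ge0.
have [[m0 shell_m0]|no_shell] := pselect (exists m, dyadic_shell m y).
  have -> : \sum_(m < K) (2 ^+ m) `^ theta * \1_(dyadic_shell m) y =
            \sum_(m < K | m == m0 :> nat) (2 ^+ m) `^ theta.
    rewrite [RHS]big_mkcond; apply: eq_bigr => m _; rewrite indicE.
    case: eqP => [->|neq_m]; first by rewrite mem_set ?mulr1.
    rewrite memNset ?mulr0// => shell_m.
    exact/neq_m/(dyadic_shell_uniq shell_m shell_m0).
  rewrite (big_ord1_eq _ (fun m => (2 ^+ m) `^ theta)); case: ifP => _.
    move: shell_m0; rewrite /dyadic_shell/= in_itv/= => /andP[le_y _].
    by rewrite ge0_ler_powR// ?nnegrE ?exprn_ge0// (le_trans _ le_y) ?exprn_ge0.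
  exact: powR_ge0.
rewrite big1 ?powR_ge0// => m _.
by rewrite indicE memNset ?mulr0// => shell_m; apply: no_shell; exists m.
Qed.

End dyadic_shells.

Section conditional_tail_bound.
Context d (T : measurableType d) (R : realType) (P : probability T R).

Definition pr (A : set T) : R := fine (P A).

Lemma EFin_pr A : measurable A -> (pr A)%:E = P A.
Proof. by move=> mA; rewrite fineK// fin_num_measure. Qed.

Lemma pr_ge0 A : 0 <= pr A.
Proof. exact/fine_ge0/measure_ge0. Qed.

Lemma pr_setT : pr setT = 1.
Proof. by rewrite /pr probability_setT. Qed.

Lemma pr_le A B : measurable A -> measurable B -> A `<=` B -> pr A <= pr B.
Proof.
by move=> mA mB AB; rewrite -lee_fin !EFin_pr//; apply: le_measure; rewrite ?inE.
Qed.

Lemma pr_setU A B : measurable A -> measurable B -> pr (A `|` B) <= pr A + pr B.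
Proof.
move=> mA mB; rewrite -lee_fin EFinD !EFin_pr//; first exact: measureU2.
exact: measurableU.
Qed.

Lemma pr_bigsetU (F : nat -> set T) n : (forall k, measurable (F k)) ->
  pr (\big[setU/set0]_(k < n) F k) <= \sum_(k < n) pr (F k).
Proof.
move=> mF; have mU : measurable (\big[setU/set0]_(k < n) F k).
  by apply: bigsetU_measurable => k _; exact: mF.
rewrite -lee_fin EFin_pr// -sumEFin.
rewrite (eq_bigr (fun k : 'I_n => P (F k))) => [|k _]; last exact: EFin_pr.
exact: content_subadditive.
Qed.

Lemma measurable_preimage (f : T -> R) B :
  measurable_fun setT f -> measurable B -> measurable (f @^-1` B).
Proof. by move=> mf mB; rewrite -[X in measurable X]setTI; exact: mf. Qed.

Lemma measurable_fun_gt (Z : T -> R) a :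
  measurable_fun setT Z -> measurable [set t | a < Z t].
Proof.
move=> mZ; apply: (measurable_preimage (B := [set y | a < y])) => //.
exact: measurable_gt.
Qed.

Definition cond_tail_bound (Z : T -> R) (theta : R) (E : set (set T)) :=
  exists C, \forall s \near +oo, forall A, E A ->
    pr ([set t | s < Z t] `&` A) * s `^ theta <= C * pr A.

Definition indep_split (Y : T -> R) (E' E : set (set T)) :=
  forall A B, E' A -> measurable B ->
    E (Y @^-1` B `&` A) /\ pr (Y @^-1` B `&` A) = pr (Y @^-1` B) * pr A.

Lemma indep_split_sub Y E' E : indep_split Y E' E -> E' `<=` E.
Proof.
by move=> splitY A E'A; have [] := splitY A setT E'A measurableT; rewrite setTI.
Qed.

Lemma indep_tail_bound (Y : T -> R) (g : R -> R) theta E' E :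
  indep_split Y E' E ->
  bigO_infty (fun x => survival P Y (g x)) (fun x => x `^ (- theta)) ->
  exists C, \forall s \near +oo, forall A, E' A ->
    pr ([set t | g s < Y t] `&` A) * s `^ theta <= C * pr A.
Proof.
move=> splitY /bigO_powRNP[C tailY]; exists C; near=> s => A E'A.
have [_ ->] := splitY A [set y | g s < y] E'A (measurable_gt (g s)).
rewrite mulrAC ler_wpM2r ?pr_ge0//; near: s; exact: tailY.
Unshelve. all: by end_near.
Qed.

Lemma dyadic_moment_le (Y : T -> R) theta K : 0 <= theta ->
  measurable_fun setT Y -> ('E_P[fun t => (Y t `^ theta)%R] < +oo)%E ->
  \sum_(m < K) (2 ^+ m) `^ theta * pr (Y @^-1` dyadic_shell m)
    <= fine 'E_P[fun t => (Y t `^ theta)%R].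
Proof.
move=> theta_ge0 mY Efin; set S := fun m => Y @^-1` dyadic_shell m.
have mS m : measurable (S m).
  by apply: measurable_preimage => //; exact: measurable_itv.
have mf m : measurable_fun setT
    (fun t => ((2 ^+ m) `^ theta * \1_(S m) t)%:E).
  by apply/measurable_EFinP/measurable_funM => //; exact: measurable_indic.
have int_f m : ((2 ^+ m) `^ theta * pr (S m))%:E =
    (\int[P]_(t in setT) ((2 ^+ m) `^ theta * \1_(S m) t)%:E)%E.
  under eq_integral do rewrite EFinM.
  rewrite ge0_integralZl// ?integral_indic// ?setIT ?EFinM ?EFin_pr//.
  by apply/measurable_EFinP; exact: measurable_indic.
rewrite -lee_fin fineK; last first.
  by rewrite ge0_fin_numE// expectation_ge0// => t; exact: powR_ge0.
rewrite -sumEFin; under eq_bigr => m _ do rewrite int_f.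
rewrite -ge0_integral_sum//.
rewrite expectation.unlock; apply: ge0_le_integral => //.
- by move=> t _; rewrite sumEFin lee_fin sumr_ge0.
- under eq_fun do rewrite sumEFin.
  by apply/measurable_EFinP/measurable_sum => m; exact: measurable_funM.
- by apply/measurable_EFinP; exact: (measurableT_comp (measurable_powR theta) mY).
- by move=> t _; rewrite sumEFin lee_fin; exact: sum_dyadic_indic_le.
Qed.

Lemma dyadic_tail_split (Z Y : T -> R) theta E' E C s m A :
  0 < s -> indep_split Y E' E -> E' A ->
  (forall B, E B -> pr ([set t | s / 2 ^+ m.+1 < Z t] `&` B) *
                      (s / 2 ^+ m.+1) `^ theta <= C * pr B) ->
  pr ([set t | s / 2 ^+ m.+1 < Z t] `&` (Y @^-1` dyadic_shell m `&` A)) *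
    s `^ theta <=
  C * 2 `^ theta * ((2 ^+ m) `^ theta * pr (Y @^-1` dyadic_shell m)) * pr A.
Proof.
move=> s_gt0 splitY E'A boundZ.
have [EB prB] := splitY A _ E'A (measurable_itv `[(2 : R) ^+ m, 2 ^+ m.+1[).
have -> : s `^ theta = (s / 2 ^+ m.+1) `^ theta * (2 `^ theta * (2 ^+ m) `^ theta).
  by rewrite -!powRM ?mulr_ge0 ?exprn_ge0 ?divr_ge0 ?ltW// -exprS mulfVK ?expf_neq0.
rewrite mulrA; apply: le_trans (ler_wpM2r _ (boundZ _ EB)) _.
  by rewrite mulr_ge0 ?powR_ge0.
by rewrite prB le_eqVlt; apply/orP; left; apply/eqP; ring.
Qed.

Lemma cond_tail_bound_ge0 Z theta E : cond_tail_bound Z theta E ->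
  exists2 C, 0 <= C & \forall s \near +oo, forall A, E A ->
    pr ([set t | s < Z t] `&` A) * s `^ theta <= C * pr A.
Proof.
move=> [C boundZ]; exists (Num.max C 0); first by rewrite le_max lexx orbT.
apply: filterS boundZ => s boundZs A EA; apply: le_trans (boundZs A EA) _.
by rewrite ler_wpM2r ?pr_ge0// le_max lexx.
Qed.

Lemma dyadic_cover (Z Y : T -> R) s p K A : (forall t, 0 <= Z t) ->
  (forall m, (2 ^+ m <= p) = (m < K)%N) ->
  [set t | s < Z t * Y t] `&` A `<=`
    [set t | p < Y t] `&` A `|` [set t | s < Z t] `&` A `|`
    \bigcup_(m in `I_K)
      ([set t | s / 2 ^+ m.+1 < Z t] `&` (Y @^-1` dyadic_shell m `&` A)).
Proof.
move=> Z_ge0 countK t [/(mul_gt_dyadic_cases p (Z_ge0 t))].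
case=> [Yt|Zt|[m [le_m Yt Zt]]] At.
- by left; left.
- by left; right.
- by right; exists m; first rewrite /= -countK.
Qed.

Lemma tail_mul_le (Z Y : T -> R) theta E' E C CY s p A :
  0 < theta -> 0 < s -> 0 <= C ->
  measurable_fun setT Z -> measurable_fun setT Y -> (forall t, 0 <= Z t) ->
  E `<=` measurable -> indep_split Y E' E -> E' A ->
  ('E_P[fun t => (Y t `^ theta)%R] < +oo)%E ->
  pr ([set t | p < Y t] `&` A) * s `^ theta <= CY * pr A ->
  pr ([set t | s < Z t] `&` A) * s `^ theta <= C * pr A ->
  (forall m, 2 ^+ m <= p -> forall B, E B ->
     pr ([set t | s / 2 ^+ m.+1 < Z t] `&` B) * (s / 2 ^+ m.+1) `^ theta
       <= C * pr B) ->
  pr ([set t | s < Z t * Y t] `&` A) * s `^ theta <=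
    (CY + C + C * 2 `^ theta * fine 'E_P[fun t => (Y t `^ theta)%R]) * pr A.
Proof.
move=> theta_gt0 s_gt0 C_ge0 mZ mY Z_ge0 mE splitY E'A momentY.
move=> tailY tailZ tailZ_shell.
have mA : measurable A by apply/mE/(indep_split_sub splitY).
have [K countK] := expr2_le_count p.
pose F m := [set t | s / 2 ^+ m.+1 < Z t] `&` (Y @^-1` dyadic_shell m `&` A).
have mF m : measurable (F m).
  apply: measurableI; first exact: measurable_fun_gt.
  apply: measurableI => //; apply: measurable_preimage => //.
  exact: measurable_itv.
have mE1 : measurable ([set t | p < Y t] `&` A).
  by apply: measurableI => //; exact: measurable_fun_gt.
have mE2 : measurable ([set t | s < Z t] `&` A).
  by apply: measurableI => //; exact: measurable_fun_gt.
have mU : measurable (\big[setU/set0]_(m < K) F m).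
  by apply: bigsetU_measurable => m _; exact: mF.
have mZY : measurable ([set t | s < Z t * Y t] `&` A).
  by apply: measurableI => //; apply: measurable_fun_gt; exact: measurable_funM.
have cover_pr : pr ([set t | s < Z t * Y t] `&` A) <=
    pr ([set t | p < Y t] `&` A) + pr ([set t | s < Z t] `&` A) +
    pr (\big[setU/set0]_(m < K) F m).
  have mE12 := measurableU _ _ mE1 mE2.
  have := dyadic_cover (Y := Y) (s := s) (A := A) Z_ge0 countK.
  rewrite bigcup_mkord => cover.
  apply: le_trans (pr_le mZY (measurableU _ _ mE12 mU) cover) _.
  by apply: le_trans (pr_setU mE12 mU) _; rewrite lerD2r pr_setU.
have tail_shells : pr (\big[setU/set0]_(m < K) F m) * s `^ theta <=
    C * 2 `^ theta * fine 'E_P[fun t => (Y t `^ theta)%R] * pr A.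
  apply: le_trans (ler_wpM2r (powR_ge0 _ _) (pr_bigsetU K mF)) _.
  rewrite mulr_suml; apply: le_trans (ler_sum _ _) _ => [m _|].
    apply: (dyadic_tail_split s_gt0 splitY E'A); apply: tailZ_shell.
    by rewrite countK.
  rewrite -mulr_suml -mulr_sumr ler_wpM2r ?pr_ge0// ler_wpM2l ?mulr_ge0 ?powR_ge0//.
  exact: dyadic_moment_le (ltW theta_gt0) mY momentY.
apply: le_trans (ler_wpM2r (powR_ge0 _ _) cover_pr) _.
by rewrite !mulrDl !lerD.
Qed.

Lemma cond_tail_bound_mul (Z Y : T -> R) (phi : R -> R) theta E' E :
  0 < theta -> measurable_fun setT Z -> measurable_fun setT Y ->
  (forall t, 0 <= Z t) -> E `<=` measurable -> indep_split Y E' E ->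
  (fun x => phi x / x) x @[x --> +oo] --> 0 ->
  bigO_infty (fun x => survival P Y (phi x)) (fun x => x `^ (- theta)) ->
  ('E_P[fun t => (Y t `^ theta)%R] < +oo)%E ->
  cond_tail_bound Z theta E -> cond_tail_bound (Z \* Y) theta E'.
Proof.
move=> theta_gt0 mZ mY Z_ge0 mE splitY phi_o tailY momentY.
move=> /cond_tail_bound_ge0[C C_ge0 tailZ].
have [CY tailYA] := indep_tail_bound splitY tailY.
have [M [_ tailZM]] := tailZ.
pose a := Num.max M 1; have a_gt0 : 0 < a by rewrite lt_max ltr01 orbT.
have M_le_a : M <= a by rewrite le_max lexx.
have eps_gt0 : 0 < (2 * a)^-1 by rewrite invr_gt0 mulr_gt0.
exists (CY + C + C * 2 `^ theta * fine 'E_P[fun t => (Y t `^ theta)%R]).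
near=> s.
have s_gt0 : 0 < s by near: s; exact: nbhs_pinfty_gt.
have phi_small : 2 * a * phi s < s.
  have ratio : phi s / s < (2 * a)^-1.
    near: s; apply: filterS (cvgr0_norm_lt _ phi_o _ eps_gt0) => x.
    exact: le_lt_trans (ler_norm _).
  by move: ratio; rewrite ltr_pdivrMr// mulrC ltr_pdivlMr ?mulr_gt0// mulrC.
have tailYs : forall B, E' B ->
    pr ([set t | phi s < Y t] `&` B) * s `^ theta <= CY * pr B.
  by near: s; exact: tailYA.
have tailZs : forall B, E B ->
    pr ([set t | s < Z t] `&` B) * s `^ theta <= C * pr B.
  by near: s; exact: tailZ.
move=> A E'A; apply: (tail_mul_le theta_gt0 s_gt0 C_ge0 mZ mY Z_ge0 mE splitY E'A
  momentY (tailYs A E'A) (tailZs A (indep_split_sub splitY E'A))).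
move=> m le_m B EB; apply: tailZM => //; apply: le_lt_trans M_le_a _.
rewrite ltr_pdivlMr ?exprn_gt0// exprS mulrA; apply: le_lt_trans phi_small.
by rewrite [a * 2]mulrC ler_pM2l ?mulr_gt0.
Unshelve. all: by end_near.
Qed.

End conditional_tail_bound.

Section rectangles.
Context d (T : measurableType d) (R : realType) (P : probability T R).
Context (N : nat) (X : nat -> T -> R).
Hypothesis mX : forall i, measurable_fun setT (X i).
Hypothesis indepX : mutually_independent P (fun i : 'I_N => X i.+1).

Definition rect k (B : nat -> set R) : set T :=
  [set t | forall i, (k < i <= N)%N -> B i (X i t)].

Definition rects k : set (set T) :=
  [set rect k B | B in [set B | forall i, measurable (B i)]].

Lemma rect_measurable k B :
  (forall i, measurable (B i)) -> measurable (rect k B).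
Proof.
move=> mB; have -> : rect k B =
    \bigcap_i X i @^-1` (if (k < i <= N)%N then B i else setT).
  apply/seteqP; split=> t /= rect_t i.
    by move=> _; case: ifPn => // /rect_t.
  by move=> ki; have := rect_t i I; rewrite /= ki.
apply: bigcapT_measurable => i; apply: measurable_preimage => //.
by case: ifP.
Qed.

Lemma pr_rect k B : (forall i, measurable (B i)) ->
  pr P (rect k B) = \prod_(i < N | (k <= i)%N) pr P (X i.+1 @^-1` B i.+1).
Proof.
move=> mB; have := @indepX [set i : 'I_N | (k <= i)%N]%SET (fun i => B i.+1).
have -> : \bigcap_(i in [set j | j \in [set i : 'I_N | (k <= i)%N]%SET])
    X i.+1 @^-1` B i.+1 = rect k B.
  apply/seteqP; split=> t /= rect_t.
    move=> [//|i] /andP[lt_ki le_iN].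
    by apply: (rect_t (Ordinal le_iN)); rewrite /= inE.
  by move=> i /=; rewrite inE => le_ki; apply: rect_t; rewrite ltnS le_ki ltn_ord.
move=> /(_ (fun i _ => mB i.+1)) prod_rect.
rewrite /pr prod_rect (eq_bigl (fun i : 'I_N => (k <= i)%N)) => [|i].
  rewrite (eq_bigr (fun i : 'I_N => (pr P (X i.+1 @^-1` B i.+1))%:E)) => [|i _].
    by rewrite prodEFin.
  by rewrite EFin_pr//; exact: measurable_preimage.
by rewrite inE.
Qed.

Lemma pr_rectS k B : (k < N)%N -> (forall i, measurable (B i)) ->
  pr P (rect k B) = pr P (X k.+1 @^-1` B k.+1) * pr P (rect k.+1 B).
Proof.
move=> kN mB; rewrite !pr_rect// (bigD1 (Ordinal kN))//=; congr (_ * _).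
by apply: eq_bigl => i; rewrite ltn_neqAle andbC eq_sym -val_eqE.
Qed.

Lemma indep_split_rects k : (k < N)%N ->
  indep_split P (X k.+1) (rects k.+1) (rects k).
Proof.
move=> kN _ C [B mB <-] mC; pose B' i := if i == k.+1 then C else B i.
have mB' i : measurable (B' i) by rewrite /B'; case: ifP.
have rectB' : rect k.+1 B' = rect k.+1 B.
  apply/seteqP; split=> t /= rect_t i /[dup] /andP[lt_ki _] /rect_t;
    by rewrite /B' gtn_eqF.
have splitB' : X k.+1 @^-1` C `&` rect k.+1 B = rect k B'.
  apply/seteqP; split=> [t [Ct rect_t] i|t rect_t].
    rewrite leq_eqVlt => /andP[/orP[/eqP <-|lt_ki] le_iN].
      by rewrite /B' eqxx.
    by rewrite -rectB' in rect_t; apply: rect_t; rewrite lt_ki.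
  split; first by have := rect_t k.+1; rewrite /B' eqxx ltnSn; apply.
  by rewrite -rectB' => i /andP[lt_ki le_iN]; apply: rect_t; rewrite le_iN ltnW.
split; first by exists B'.
by rewrite splitB' pr_rectS// rectB' /B' eqxx.
Qed.

Lemma rects_setT k : rects k setT.
Proof. by exists (fun _ => setT) => //; apply/seteqP; split. Qed.

Lemma cond_tail_bound_prod theta k : 0 < theta ->
  (forall i, (1 <= i <= N)%N -> forall t, 0 <= X i t) ->
  bigO_infty (survival P (X 1%N)) (fun x => x `^ (- theta)) ->
  (forall j, (2 <= j <= N)%N ->
     exists phi : R -> R, frakF phi /\
       bigO_infty (fun x => survival P (X j) (phi x)) (fun x => x `^ (- theta)) /\
       ('E_P[fun t => (X j t `^ theta)%R] < +oo)%E) ->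
  (1 <= k <= N)%N ->
  cond_tail_bound P (fun t => \prod_(1 <= i < k.+1) X i t) theta (rects k).
Proof.
move=> theta_gt0 X_ge0 tail1 tailj; elim: k => [//|[|k] IHk] /andP[_ kN].
  have -> : (fun t => \prod_(1 <= i < 2) X i t) = X 1%N.
    by apply/funext => t; rewrite big_nat1.
  exact: (indep_tail_bound (g := id) (indep_split_rects kN) tail1).
have [phi [[_ [_ phi_o]] [tailY momentY]]] := tailj k.+2 kN.
have -> : (fun t => \prod_(1 <= i < k.+3) X i t) =
    (fun t => \prod_(1 <= i < k.+2) X i t) \* X k.+2.
  by apply/funext => t; rewrite big_nat_recr.
apply: (cond_tail_bound_mul (phi := phi) (E := rects k.+1)) => //.
- by apply: measurable_prod => i _; exact: mX.
- move=> t; rewrite big_seq; apply: prodr_ge0 => i; rewrite mem_index_iota.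
  move=> /andP[i_ge1 lt_ik]; apply: X_ge0.
  by rewrite i_ge1 (leq_trans (ltnW lt_ik) kN).
- by move=> _ [B mB <-]; exact: rect_measurable.
- exact: indep_split_rects.
- exact: IHk (ltnW kN).
Qed.

End rectangles.

Theorem theorem10 (R : realType) (d : measure_display) (T : measurableType d)
  (P : probability T R) (N : nat) (X : nat -> T -> R) (theta : R) :
  (1 <= N)%N ->
  0 < theta ->
  (forall i, measurable_fun setT (X i)) ->
  mutually_independent P (fun i : 'I_N => X i.+1) ->
  (forall i, (1 <= i <= N)%N -> forall t, 0 <= X i t) ->
  bigO_infty (survival P (X 1%N)) (fun x => x `^ (- theta)) ->
  (forall j, (2 <= j <= N)%N ->
     exists phi : R -> R, frakF phi /\
       bigO_infty (fun x => survival P (X j) (phi x)) (fun x => x `^ (- theta)) /\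
       ('E_P[fun t => (X j t `^ theta)%R] < +oo)%E) ->
  bigO_infty (survival P (fun t => \prod_(1 <= i < N.+1) X i t))
    (fun x => x `^ (- theta)).
Proof.
move=> N_ge1 theta_gt0 mX indepX X_ge0 tail1 tailj.
have [C boundN] : cond_tail_bound P (fun t => \prod_(1 <= i < N.+1) X i t) theta
    (rects N X N).
  by apply: cond_tail_bound_prod; rewrite ?N_ge1 ?leqnn.
apply/bigO_powRNP; exists C; apply: filterS boundN => s /(_ _ (rects_setT N X N)).
by rewrite setIT pr_setT mulr1.
Qed.
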